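(* Let $(G_n)$ be a tight sequence of finite connected graphs with bounded average degree (i.e. $\sup_n 2|E(G_n)|/|V(G_n)|<\infty$) such that $\lim_n |V(G_n)|^{-1}\log\tau(G_n)=h$. Let $G'_n$ be connected subgraphs of $G_n$ such that $$\lim_{n\to\infty}|V(G_n)|^{-1}\bigl|\{x\in V(G'_n):\deg_{G'_n}(x)=\deg_{G_n}(x)\}\bigr|=1.$$ Then $\lim_n |V(G'_n)|^{-1}\log\tau(G'_n)=h$.
   Context: $\tau(G)$ is the number of spanning trees of $G$. For $R>0$ and a finite graph $G$, $\nu_R(G)$ is the distribution of the number of edges in the ball of radius $R$ about a uniformly random vertex of $G$. A collection of finite graphs is tight if for each $R$ the collection of corresponding distributions $\nu_R(G)$ is tight. *)

From HB Require Import structures.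
From mathcomp Require Import all_boot all_order all_algebra.
From mathcomp Require Import all_classical all_reals all_analysis.
Set Implicit Arguments. Unset Strict Implicit. Unset Printing Implicit Defensive.
Import Order.TTheory GRing.Theory Num.Theory.

(* A finite (multi)graph: loops and multiple edges are allowed. *)
Record graph := Graph {
  gV : finType;
  gE : finType;
  ends : gE -> gV * gV }.

Section GraphDefs.
Variable G : graph.
Local Notation V := (gV G).
Local Notation E := (gE G).

Definition joins (e : E) (x y : V) : bool :=
  (ends e == (x, y)) || (ends e == (y, x)).

Definition adjF (F : {set E}) : rel V :=
  fun x y => [exists e in F, joins e x y].

Definition is_subgraph (S : {set V}) (F : {set E}) : Prop :=
  forall e, e \in F -> (ends e).1 \in S /\ (ends e).2 \in S.

Definition connected_sub (S : {set V}) (F : {set E}) : Prop :=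
  S != finset.set0 /\ forall x y, x \in S -> y \in S -> connect (adjF F) x y.

(* Loops are cycles of
   length 1, pairs of parallel edges are cycles of length 2. *)
Definition cycle_in (F : {set E}) (vs : seq V) (es : seq E) : Prop :=
  [/\ [&& 0 < size vs, size es == size vs, uniq vs & uniq es],
      all (fun e => e \in F) es &
      (forall (x0 : V) (e0 : E) i, i < size es ->
        joins (nth e0 es i) (nth x0 vs i) (nth x0 vs ((i.+1) %% size vs)))].

Definition acyclic (F : {set E}) : Prop :=
  ~ exists vs es, cycle_in F vs es.

Definition spanning_tree (S : {set V}) (F : {set E}) (T : {set E}) : Prop :=
  T \subset F /\ connected_sub S T /\ acyclic T.

Definition tau (S : {set V}) (F : {set E}) : nat :=
  #|[set T : {set E} | `[< spanning_tree S F T >]]|.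

(* degree in the subgraph with edge set F (a loop counts twice) *)
Definition deg (F : {set E}) (x : V) : nat :=
  #|[set e in F | (ends e).1 == x]| + #|[set e in F | (ends e).2 == x]|.

Fixpoint ball (R : nat) (x : V) : {set V} :=
  match R with
  | 0 => [set x]
  | R'.+1 => ball R' x :|: [set y | [exists z in ball R' x, adjF [set: E] z y]]
  end.

Definition ball_edges (R : nat) (x : V) : nat :=
  #|[set e : E | ((ends e).1 \in ball R x) && ((ends e).2 \in ball R x)]|.

Definition connected_graph : Prop := connected_sub [set: V] [set: E].

End GraphDefs.

(* Tightness of the sequence: for each R > 0 the laws nu_R(G n) of the
   number of edges in the ball of radius R about a uniform random vertex
   form a tight family of distributions on nat. *)
Definition tight (Rt : realType) (G : nat -> graph) : Prop :=
  forall R : nat, (0 < R)%N ->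
  forall eps : Rt, (0 < eps)%R ->
  exists M : nat, forall n,
    ((#|[set x : gV (G n) | (M < ball_edges R x)%N]|%:R : Rt)
       / (#|gV (G n)|%:R) < eps)%R.

(* Let b be the number of vertices at which the subgraph (S, F) of G does not
   have full degree; by hypothesis b = o(|V|).  A spanning tree of (S, F) extends
   to one of G by adding at most |V \ S| <= b edges.  Conversely, if T is a
   spanning tree of G, a component of the forest T ∩ F avoiding the b defective
   vertices is closed under T-adjacency, hence is all of V; so T ∩ F has at most
   b + 1 components, and T arises from a spanning tree of (S, F) by deleting at
   most b edges and adding at most b others.  Hence
   |ln τ(S, F) - ln τ(G)| <= 2 ln K_b, where K_b is the number of edge sets of
   size at most b, and K_b t^b <= (1 + t)^|E| gives ln K_b <= |E| t + b ln(1/t),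
   which is o(|V|) when the average degree is bounded.  As |S| / |V| -> 1 too,
   both normalised tree entropies have the same limit. *)

From HB Require Import structures.
From mathcomp Require Import all_boot all_order all_algebra.
From mathcomp Require Import all_classical all_reals all_analysis.
From mathcomp Require Import fintype finset fingraph.
From mathcomp Require Import lra.
Import Order.TTheory GRing.Theory Num.Theory.
Import numFieldNormedType.Exports.
Set Implicit Arguments. Unset Strict Implicit. Unset Printing Implicit Defensive.

Section Forests.
Variable G : graph.
Local Notation V := (gV G).
Local Notation E := (gE G).

Lemma joinsC (e : E) x y : joins e x y = joins e y x.
Proof. by rewrite /joins orbC. Qed.

Lemma joins_ends (e : E) : joins e (ends e).1 (ends e).2.
Proof. by rewrite /joins -surjective_pairing eqxx. Qed.

Lemma joins_ends_uniq (e : E) a b c d : joins e a b -> joins e c d ->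
  (a = c /\ b = d) \/ (a = d /\ b = c).
Proof. by rewrite /joins => /orP[] /eqP -> /orP[] /eqP [] -> ->; tauto. Qed.

Lemma adjF_sym (X : {set E}) : symmetric (adjF X).
Proof.
by move=> x y; apply/existsP/existsP => -[e He]; exists e; rewrite joinsC.
Qed.

Lemma connect_adjF_sym (X : {set E}) : connect_sym (adjF X).
Proof. exact/sym_connect_sym/adjF_sym. Qed.

Lemma adjF_ends (X : {set E}) e : e \in X -> adjF X (ends e).1 (ends e).2.
Proof. by move=> eX; apply/existsP; exists e; rewrite eX joins_ends. Qed.

Lemma sub_connect_adjF (X Y : {set E}) : X \subset Y ->
  subrel (connect (adjF X)) (connect (adjF Y)).
Proof.
move=> sXY; apply: connect_sub => x y /existsP[e /andP[eX xy]].
by apply/connect1/existsP; exists e; rewrite (subsetP sXY _ eX).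
Qed.

Definition ncomp (X : {set E}) := #|[set root (adjF X) x | x : V]|.

Lemma ncomp_gt0 (X : {set E}) (x : V) : 0 < ncomp X.
Proof. by apply/card_gt0P; exists (root (adjF X) x); apply: imset_f. Qed.

Lemma ncomp_setU1 (X : {set E}) e :
  ~~ connect (adjF X) (ends e).1 (ends e).2 -> ncomp (e |: X) < ncomp X.
Proof.
move=> ncon; rewrite /ncomp; set A := [set root (adjF X) x | x : V].
have sXeX : X \subset e |: X := subsetUr _ _.
have root_eX : forall x, root (adjF (e |: X)) (root (adjF X) x) = root (adjF (e |: X)) x.
  move=> x; apply/eqP; rewrite (root_connect (connect_adjF_sym _)).
  by apply: (sub_connect_adjF sXeX); rewrite connect_adjF_sym connect_root.
have -> : [set root (adjF (e |: X)) x | x : V] = root (adjF (e |: X)) @: A.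
  by rewrite -imset_comp; apply: eq_imset => x /=; rewrite root_eX.
rewrite ltn_neqAle leq_imset_card andbT; apply: contra ncon => /imset_injP inj.
have r1 : root (adjF X) (ends e).1 \in A by apply: imset_f.
have r2 : root (adjF X) (ends e).2 \in A by apply: imset_f.
rewrite -(root_connect (connect_adjF_sym X)); apply/eqP/inj => //.
rewrite !root_eX; apply/eqP; rewrite (root_connect (connect_adjF_sym _)).
by apply/connect1/adjF_ends/setU11.
Qed.

Lemma ncomp_le_cover (X : {set E}) (P : {set V}) z :
  (forall x, connect (adjF X) x z \/ exists2 p, p \in P & connect (adjF X) x p) ->
  ncomp X <= #|P|.+1.
Proof.
move=> cover; rewrite /ncomp.
have sub : [set root (adjF X) x | x : V] \subset root (adjF X) z |: (root (adjF X) @: P).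
  apply/subsetP => _ /imsetP[x _ ->]; rewrite in_setU1.
  case: (cover x) => [xz | [p pP xp]].
    by rewrite (root_connect (connect_adjF_sym X)) xz.
  apply/orP; right; apply/imsetP; exists p => //.
  by apply/eqP; rewrite (root_connect (connect_adjF_sym _)).
apply: leq_trans (subset_leq_card sub) _.
by rewrite cardsU1 -add1n leq_add ?leq_b1 ?leq_imset_card.
Qed.

Lemma acyclicS (X Y : {set E}) : X \subset Y -> acyclic Y -> acyclic X.
Proof.
move=> sXY acycY [vs [es [cyc allX jn]]]; apply: acycY; exists vs, es; split=> //.
by apply: sub_all allX => e /(subsetP sXY).
Qed.

Lemma acyclic0 : acyclic (set0 : {set E}).
Proof.
move=> [vs [[|e es] [/and4P[k0 /eqP sz _ _] /= eF _]]]; last by rewrite inE in eF.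
by rewrite -sz in k0.
Qed.

Lemma cycle_in_connect (F : {set E}) vs es (x0 : V) (e0 : E) i :
  cycle_in F vs es -> i < size es ->
  connect (adjF (F :\ nth e0 es i)) (nth x0 vs (i.+1 %% size vs)) (nth x0 vs i).
Proof.
case=> /and4P[k0 /eqP szes _ ues] allF jn ik; rewrite szes in ik.
set k := size vs in k0 ik *.
suff walk : forall j, j < k -> connect (adjF (F :\ nth e0 es i))
    (nth x0 vs (i.+1 %% k)) (nth x0 vs ((i.+1 + j) %% k)).
  by have := walk k.-1; rewrite prednK // addSn -addnS prednK // modnDr (modn_small ik); apply.
elim=> [|j IHj] jk; first by rewrite addn0.
apply: connect_trans (IHj (ltnW jk)) _; apply: connect1.
set idx := (i.+1 + j) %% k.
have idxk : idx < k by rewrite ltn_pmod.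
have idx_i : idx != i.
  have := eqn_modDl i j.+1 0 k.
  by rewrite addn0 (modn_small ik) mod0n (modn_small jk) addnS -addSn => ->.
have := jn x0 e0 idx; rewrite szes => /(_ idxk).
rewrite -addn1 modnDml addn1 addnS -/idx => jidx.
apply/existsP; exists (nth e0 es idx); rewrite jidx andbT !inE.
rewrite nth_uniq ?szes // idx_i /=.
by apply: (allP allF); rewrite mem_nth ?szes.
Qed.

Lemma acyclic_setU1 (X : {set E}) e : acyclic X ->
  ~~ connect (adjF X) (ends e).1 (ends e).2 -> acyclic (e |: X).
Proof.
move=> acycX ncon [vs [es cyc]]; case: (cyc) => cyc_props allF jn.
have [ein | enotin] := boolP (e \in es); last first.
  apply: acycX; exists vs, es; split=> //; apply/allP => f fes.
  have := allP allF f fes; rewrite in_setU1 => /predU1P[fe|//].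
  by move: enotin; rewrite -fe fes.
set x0 := (ends e).1; set i := index e es.
have ik : i < size es by rewrite index_mem.
have /and4P[_ /eqP szes _ _] := cyc_props.
have sub : (e |: X) :\ e \subset X by apply/subsetP => f; rewrite !inE => /andP[/negPf ->].
have := cycle_in_connect x0 e cyc ik; rewrite nth_index // => /(sub_connect_adjF sub).
have := jn x0 e i ik; rewrite nth_index // -szes.
case/(joins_ends_uniq (joins_ends e)) => [][<- <-] con; move: ncon.
  by rewrite connect_adjF_sym con.
by rewrite con.
Qed.

Lemma path_edges (F : {set E}) v p : path (adjF F) v p -> uniq (v :: p) ->
  exists es : seq E, [/\ size es = size p, uniq es, all (fun e => e \in F) es &
    forall x0 e0 i, i < size p -> joins (nth e0 es i) (nth x0 (v :: p) i) (nth x0 p i)].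
Proof.
elim: p v => [|u p IHp] v /=; first by exists [::].
case/andP=> /existsP[f /andP[fF fvu]] pu /andP[]; rewrite inE negb_or.
case/andP=> vu vp uniq_up; have [es [sz ues Fes jes]] := IHp u pu uniq_up.
exists (f :: es); split=> /=; [by rewrite sz | | by rewrite fF Fes | ]; last first.
  by move=> x0 e0 [|i] // ip; apply: jes.
rewrite ues andbT; apply/negP => /(nthP f)[j]; rewrite sz => jp fj.
have := jes u f j jp; rewrite fj => /(joins_ends_uniq fvu) [][vj _].
  have : v \in u :: p by rewrite vj mem_nth // ltnW.
  by rewrite inE (negPf vu) (negPf vp).
by move: vp; rewrite vj mem_nth.
Qed.

Lemma acyclic_bridge (Z : {set E}) e : acyclic Z -> e \in Z ->
  ~~ connect (adjF (Z :\ e)) (ends e).1 (ends e).2.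
Proof.
move=> acycZ eZ; apply/negP; set u := (ends e).1; set v := (ends e).2 => con.
have jeuv : joins e u v := joins_ends e.
rewrite connect_adjF_sym in con; case/connectP: con => p0 /shortenP[p pp up _ lp].
have [es [szes ues Fes jes]] := path_edges pp up.
apply: acycZ; exists (v :: p), (rcons es e); split.
- rewrite size_rcons szes eqxx up rcons_uniq ues andbT /=.
  by apply/negP => /(allP Fes); rewrite !inE eqxx.
- by rewrite all_rcons eZ; apply: sub_all Fes => f /setD1P[].
move=> x0 e0 i; rewrite size_rcons szes ltnS leq_eqVlt => /predU1P[->|ip].
  rewrite modnn nth_rcons szes ltnn eqxx.
  by rewrite -[size p]/((size (v :: p)).-1) nth_last /= -lp.
rewrite nth_rcons szes ip modn_small ?ltnS //; exact: jes.
Qed.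

Lemma acyclic_ncomp (Z X : {set E}) : acyclic Z -> X \subset Z ->
  #|Z :\: X| + ncomp Z <= ncomp X.
Proof.
have [n] := ubnP #|Z :\: X|; elim: n Z => // n IHn Z szZX acycZ sXZ.
have [ZX0 | [e]] := set_0Vmem (Z :\: X).
  have -> : Z = X by apply/eqP; rewrite eqEsubset sXZ andbT -setD_eq0 ZX0.
  by rewrite setDv cards0.
rewrite inE => /andP[eX eZ].
have cardZX : #|Z :\: X| = #|(Z :\ e) :\: X|.+1.
  by rewrite (cardsD1 e) inE eX eZ add1n !setDDl setUC.
have sXZe : X \subset Z :\ e.
  by apply/subsetP => x xX; rewrite !inE (subsetP sXZ _ xX) andbT; apply: contraNneq eX => <-.
have szZe : #|(Z :\ e) :\: X| < n by rewrite -ltnS -cardZX.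
have IH := IHn (Z :\ e) szZe (acyclicS (subD1set Z e) acycZ) sXZe.
have := ncomp_setU1 (acyclic_bridge acycZ eZ); rewrite setD1K // => lt_ncomp.
by rewrite cardZX addSn; apply: leq_trans IH; rewrite -addnS leq_add2l.
Qed.

Lemma spanning_tree_extend (S : {set V}) (F X : {set E}) : connected_sub S F ->
  X \subset F -> acyclic X ->
  exists T, [/\ spanning_tree S F T, X \subset T & #|T :\: X| + ncomp T <= ncomp X].
Proof.
case=> S0 conF; have [n] := ubnP #|F :\: X|; elim: n X => // n IHn X szFX sXF acycX.
have [/existsP[e]|] := boolP [exists e in F :\: X, ~~ connect (adjF X) (ends e).1 (ends e).2].
  rewrite inE => /andP[/andP[eX eF] ncon].
  have cardD : forall T : {set E}, e \in T -> #|T :\: X| = #|T :\: (e |: X)|.+1.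
    by move=> T eT; rewrite (cardsD1 e) inE eT eX add1n setDDl setUC.
  have [|||T [treeT sXT szT]] := IHn (e |: X); first by rewrite -ltnS -cardD.
  - by rewrite subUset sub1set eF.
  - exact: acyclic_setU1.
  have eT : e \in T by apply: (subsetP sXT); rewrite setU11.
  exists T; split=> //; first exact: subset_trans (subsetUr _ _) sXT.
  by rewrite (cardD _ eT) addSn; apply: leq_ltn_trans szT (ncomp_setU1 ncon).
rewrite negb_exists => /forallP closedX.
exists X; split=> //; last by rewrite setDv cards0.
split=> //; split=> //; split=> // x y xS yS.
apply: connect_sub (conF x y xS yS) => a b /existsP[f /andP[fF fab]].
have [fX | fnX] := boolP (f \in X).
  by apply/connect1/existsP; exists f; rewrite fX.
have := closedX f; rewrite inE (negPf fnX) fF negbK => con.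
by case: (joins_ends_uniq (joins_ends f) fab) => [][<- <-] //; rewrite connect_adjF_sym.
Qed.

Lemma ncomp_card_setD_le (T X : {set E}) (z : V) b :
  #|T :\: X| + ncomp T <= ncomp X -> ncomp X <= b.+1 -> #|T :\: X| <= b.
Proof.
move=> leTX leXb; rewrite -ltnS; apply: leq_trans leXb; apply: leq_trans leTX.
by rewrite -addn1 leq_add2l (ncomp_gt0 T z).
Qed.

Definition spanning_trees (S : {set V}) (F : {set E}) :=
  [set T : {set E} | `[< spanning_tree S F T >]].

Lemma spanning_treesP S F T : reflect (spanning_tree S F T) (T \in spanning_trees S F).
Proof. by rewrite inE; apply: asboolP. Qed.

Lemma tau_gt0 (S : {set V}) (F : {set E}) : connected_sub S F -> 0 < tau S F.
Proof.
move=> conSF; have [T [treeT _ _]] := spanning_tree_extend conSF (sub0set F) acyclic0.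
by apply/card_gt0P; exists T; apply/spanning_treesP.
Qed.

End Forests.

Definition small_sets (T : finType) (b : nat) : {set {set T}} :=
  [set D : {set T} | #|D| <= b].

Lemma card_small_sets_gt0 (T : finType) b : 0 < #|small_sets T b|.
Proof. by apply/card_gt0P; exists set0; rewrite inE cards0. Qed.

Lemma card_le_imset_setX (A B C : finType) (P : {set A}) (Q : {set B}) (K : {set C})
    (f : B * C -> A) :
  P \subset f @: setX Q K -> #|P| <= #|Q| * #|K|.
Proof.
by move=> sP; rewrite -cardsX; apply: leq_trans (subset_leq_card sP) (leq_imset_card _ _).
Qed.

Section TreeCounting.
Variables (G : graph) (S : {set gV G}) (F : {set gE G}).
Local Notation V := (gV G).
Local Notation E := (gE G).
Hypotheses (conG : connected_graph G) (conSF : connected_sub S F).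

Definition full_deg := [set x in S | deg F x == deg [set: E] x].

Lemma full_deg_sub : full_deg \subset S.
Proof. by apply/subsetP => x; rewrite inE => /andP[]. Qed.

Lemma full_deg_edge x e : x \in full_deg ->
  ((ends e).1 == x) || ((ends e).2 == x) -> e \in F.
Proof.
rewrite inE /deg => /andP[_ /eqP hdeg].
set A1 := [set f in F | (ends f).1 == x]; set B1 := [set f in [set: E] | (ends f).1 == x].
set A2 := [set f in F | (ends f).2 == x]; set B2 := [set f in [set: E] | (ends f).2 == x].
have sub1 : A1 \subset B1 by apply/subsetP => f; rewrite !inE => /andP[_ ->].
have sub2 : A2 \subset B2 by apply/subsetP => f; rewrite !inE => /andP[_ ->].
have le1 := subset_leq_card sub1; have le2 := subset_leq_card sub2.
have /subset_cardP/(_ sub1) A1B1 : #|A1| = #|B1|.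
  by apply/eqP; rewrite eqn_leq le1 -(leq_add2r #|A2|) hdeg leq_add2l.
have /subset_cardP/(_ sub2) A2B2 : #|A2| = #|B2|.
  by apply/eqP; rewrite eqn_leq le2 -(leq_add2l #|A1|) hdeg leq_add2r.
case/orP => incid.
  by have := A1B1 e; rewrite !inE incid andbT => ->.
by have := A2B2 e; rewrite !inE incid andbT => ->.
Qed.

Lemma spanning_tree_sub_extend T' : spanning_tree S F T' ->
  exists2 T, T \in spanning_trees [set: V] [set: E] & T' \subset T /\ #|T :\: T'| <= #|~: full_deg|.
Proof.
case=> _ [conT' acycT']; case: conSF => /set0Pn[z zS] _.
have [T [treeT sT'T szT]] := spanning_tree_extend conG (subsetT T') acycT'.
exists T; first exact/spanning_treesP.
split=> //; apply: (@leq_trans #|~: S|); last first.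
  by rewrite subset_leq_card // setCS full_deg_sub.
apply: (ncomp_card_setD_le z szT); apply: (ncomp_le_cover (z := z)) => x.
have [xS | xnS] := boolP (x \in S); first by left; apply: conT'.2.
by right; exists x; rewrite ?inE.
Qed.

Lemma tau_sub_le : tau S F <= tau [set: V] [set: E] * #|small_sets E #|~: full_deg| |.
Proof.
apply: (card_le_imset_setX (f := fun p => p.1 :\: p.2)).
apply/subsetP => T' /spanning_treesP treeT'.
have [T treeT [sT'T szT]] := spanning_tree_sub_extend treeT'.
apply/imsetP; exists (T, T :\: T'); first by rewrite in_setX treeT inE szT.
by rewrite /= setDDr setDv set0U (setIidPr sT'T).
Qed.

Lemma ncomp_setI_full_deg T (z : V) : connected_sub [set: V] T ->
  ncomp (T :&: F) <= #|~: full_deg|.+1.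
Proof.
move=> conT; apply: (ncomp_le_cover (z := z)) => x.
set X := T :&: F.
have [/existsP[p /andP[pB xp]] | ] := boolP [exists p in ~: full_deg, connect (adjF X) x p].
  by right; exists p.
rewrite negb_exists => /forallP noBad; left.
set C := [set y | connect (adjF X) x y].
have closedC : forall a c, a \in C -> adjF T a c -> c \in C.
  move=> a c; rewrite !inE => xa /existsP[f /andP[fT fac]].
  have a_full : a \in full_deg by have := noBad a; rewrite inE xa andbT negbK.
  have fF : f \in F.
    apply: (full_deg_edge a_full); move: fac; rewrite /joins.
    by case/orP => /eqP -> /=; rewrite eqxx ?orbT.
  by apply: (connect_trans xa); apply/connect1/existsP; exists f; rewrite !inE fT fF.
have : closed (adjF T) C.
  move=> a c ac; apply/idP/idP => h; first exact: closedC h ac.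
  by apply: closedC h _; rewrite adjF_sym.
move/closed_connect/(_ _ _ (conT.2 x z (in_setT x) (in_setT z))).
by rewrite !inE connect0 => <-.
Qed.

Lemma tau_le_sub : tau [set: V] [set: E] <=
  tau S F * (#|small_sets E #|~: full_deg| | * #|small_sets E #|~: full_deg| |).
Proof.
set b := #|~: full_deg|; case: conG => /set0Pn[z _] _.
rewrite -cardsX; apply: (card_le_imset_setX (f := fun p => (p.1 :\: p.2.1) :|: p.2.2)).
apply/subsetP => T /spanning_treesP[_ [conT acycT]].
set X := T :&: F; have sXT : X \subset T := subsetIl T F.
have [T2 [treeT2 sXT2 szT2]] :=
  spanning_tree_extend conSF (subsetIr T F) (acyclicS sXT acycT).
have ncompX := ncomp_setI_full_deg z conT.
have le1 : #|T :\: X| <= b := ncomp_card_setD_le z (acyclic_ncomp acycT sXT) ncompX.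
have le2 : #|T2 :\: X| <= b := ncomp_card_setD_le z szT2 ncompX.
apply/imsetP; exists (T2, (T2 :\: X, T :\: X)).
  by rewrite !inE le1 le2 !andbT; apply/asboolP.
rewrite /= setDDr setDv set0U (setIidPr sXT2) /X.
by apply/setP => e; rewrite !inE; case: (e \in T); case: (e \in F).
Qed.

End TreeCounting.

Local Open Scope ring_scope.

Lemma sum_exprn_card (R : comNzRingType) (T : finType) (t : R) :
  \sum_(D : {set T}) t ^+ #|D| = (1 + t) ^+ #|T|.
Proof.
rewrite -[#|T|]/#|predT : pred T| -prodr_const.
have -> : \prod_(i in predT : pred T) (1 + t) =
    \prod_(i in predT : pred T) \sum_(b : bool) (if b then t else 1).
  by apply: eq_bigr => i _; rewrite big_bool addrC.
rewrite bigA_distr_bigA (reindex (fun D : {set T} => [ffun i => i \in D])) /=; last first.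
  exists (fun f : {ffun T -> bool} => [set i | f i]) => [D _ | f _].
    by apply/setP => i; rewrite inE ffunE.
  by apply/ffunP => i; rewrite ffunE inE.
apply: eq_bigr => D _; rewrite -prodr_const big_mkcond /=.
by apply: eq_bigr => i _; rewrite ffunE.
Qed.

Lemma card_small_sets_le (R : realFieldType) (T : finType) b (t : R) :
  0 < t -> t <= 1 -> #|small_sets T b|%:R * t ^+ b <= (1 + t) ^+ #|T|.
Proof.
move=> t_gt0 t_le1; rewrite -sum_exprn_card mulr_natl -sumr_const.
rewrite [leRHS](bigID (mem (small_sets T b))) /= -[leLHS]addr0 lerD //.
  by apply: ler_sum => D; rewrite inE => Db; rewrite ler_wiXn2l // ltW.
by apply: sumr_ge0 => D _; rewrite exprn_ge0 // ltW.
Qed.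

Lemma ln_card_small_sets_le (R : realType) (T : finType) b (t : R) :
  0 < t -> t <= 1 -> ln #|small_sets T b|%:R <= #|T|%:R * t - b%:R * ln t.
Proof.
move=> t_gt0 t_le1.
have K_gt0 : (0 : R) < #|small_sets T b|%:R by rewrite ltr0n card_small_sets_gt0.
have tb_gt0 : 0 < t ^+ b := exprn_gt0 b t_gt0.
have t1_gt0 : 0 < 1 + t by rewrite addr_gt0.
have h : ln (#|small_sets T b|%:R * t ^+ b) <= ln ((1 + t) ^+ #|T|).
  rewrite ler_ln ?posrE ?card_small_sets_le //; first exact: mulr_gt0.
  exact: exprn_gt0.
move: h; rewrite lnM ?posrE // !lnXn // => h.
rewrite !mulr_natl lerBrDr; apply: le_trans h (ler_wMn2r _ (le_ln1Dx _)).
by rewrite (lt_trans _ t_gt0) // ltrN10.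
Qed.

Lemma ln_le_natM (R : realType) (a b c : nat) : (0 < a)%N -> (a <= b * c)%N ->
  ln (a%:R : R) <= ln b%:R + ln c%:R.
Proof.
move=> a_gt0 le_abc; have /[!muln_gt0] /andP[b_gt0 c_gt0] := leq_trans a_gt0 le_abc.
by rewrite -lnM ?posrE ?ltr0n // -natrM ler_ln ?posrE ?ltr0n ?muln_gt0 ?b_gt0 // ler_nat.
Qed.

Local Open Scope classical_set_scope.

Lemma ln_card_small_sets_cvg0 (R : realType) (T : nat -> finType) (b N : nat -> nat) (C : R) :
  (forall n, 0 < N n)%N -> (forall n, #|T n|%:R / (N n)%:R <= C) ->
  (fun n => (b n)%:R / (N n)%:R : R) @ \oo --> 0 ->
  (fun n => ln (#|small_sets (T n) (b n)|%:R : R) / (N n)%:R) @ \oo --> 0.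
Proof.
move=> N_gt0 TN_le /cvgr0Pnorm_le bN0; apply/cvgr0Pnorm_le => eps eps_gt0.
have C_ge0 : 0 <= C by apply: le_trans (TN_le 0); rewrite divr_ge0.
pose t := Order.min 1 (eps / (2 * (C + 1))).
have C1_gt0 : 0 < C + 1 by lra.
have t_gt0 : 0 < t by rewrite lt_min ltr01 divr_gt0 ?mulr_gt0.
have t_le1 : t <= 1 by rewrite ge_min lexx.
have Ct : C * t <= eps / 2.
  have : t <= eps / (2 * (C + 1)) by rewrite ge_min lexx orbT.
  rewrite ler_pdivlMr ?mulr_gt0 //.
  by move: C_ge0 t_gt0; nra.
pose q := - ln t; have q_ge0 : 0 <= q by rewrite oppr_ge0 ln_le0.
pose d := eps / (2 * (q + 1)); have q1_gt0 : 0 < q + 1 by lra.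
have d_gt0 : 0 < d by rewrite divr_gt0 ?mulr_gt0.
have dq : d * q <= eps / 2.
  rewrite /d mulrAC ler_pdivrMr ?mulr_gt0 //.
  by move: eps_gt0 q_ge0; nra.
apply: filterS (bN0 d d_gt0) => n.
rewrite !ger0_norm ?divr_ge0 ?ln_ge0 ?ler1n ?card_small_sets_gt0 // => bN_le.
have Nn_gt0 : (0 : R) < (N n)%:R by rewrite ltr0n.
have : ln #|small_sets (T n) (b n)|%:R / (N n)%:R <=
    #|T n|%:R / (N n)%:R * t + (b n)%:R / (N n)%:R * q.
  rewrite mulrAC [_ / _ * q]mulrAC -mulrDl ler_pM2r ?invr_gt0 // /q mulrN.
  exact: ln_card_small_sets_le.
have := ler_wpM2r (ltW t_gt0) (TN_le n); have := ler_wpM2r q_ge0 bN_le.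
lra.
Qed.

Lemma cvg0_norm_le (R : realType) (u v : nat -> R) (k : R) :
  (forall n, `|u n| <= k * v n) -> v @ \oo --> 0 -> u @ \oo --> 0.
Proof.
move=> uv v0; have kv0 : (fun n => k * v n) @ \oo --> 0.
  by rewrite -(mulr0 k); apply: cvgMr.
apply: norm_cvg0; apply: (@squeeze_cvgr _ _ _ _ (cst 0) _ _ _ 0 (cvg_cst 0) kv0).
by apply: nearW => n; rewrite normr_ge0 uv.
Qed.

Lemma cvg_div_perturb (R : realType) (x y s N : nat -> R) (h : R) :
  (forall n, N n != 0) -> (forall n, s n != 0) ->
  (fun n => x n / N n) @ \oo --> h ->
  (fun n => (y n - x n) / N n) @ \oo --> 0 ->
  (fun n => s n / N n) @ \oo --> (1 : R) ->
  (fun n => y n / s n) @ \oo --> h.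
Proof.
move=> N_neq0 s_neq0 xN yxN /(cvgV (oner_neq0 R)); rewrite invr1 => Ns.
have -> : (fun n => y n / s n) =
    (fun n => (x n / N n + (y n - x n) / N n) * (s n / N n)^-1).
  by apply/funext => n /=; rewrite -mulrDl addrC subrK invf_div mulrA divfK.
by have := cvgM (cvgD xN yxN) Ns; rewrite addr0 mulr1; apply.
Qed.

Lemma ln_tau_sub_dist (R : realType) (G : graph) (S : {set gV G}) (F : {set gE G}) :
  connected_graph G -> connected_sub S F ->
  `|ln (tau S F)%:R - ln (tau [set: gV G] [set: gE G])%:R| <=
    2 * ln (#|small_sets (gE G) #|~: full_deg S F| |%:R : R).
Proof.
move=> conG conSF; set K := #|small_sets _ _|.
have le_sub := ln_le_natM R (tau_gt0 conSF) (tau_sub_le conG conSF).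
have le_full := ln_le_natM R (tau_gt0 conG) (tau_le_sub conG conSF).
have K_gt0 : (0 < K)%N := card_small_sets_gt0 _ _.
have lnK_ge0 : 0 <= ln (K%:R : R) by rewrite ln_ge0 // ler1n.
rewrite natrM lnM ?posrE ?ltr0n // in le_full.
by rewrite ler_norml; apply/andP; split; lra.
Qed.

Unset Implicit Arguments.

Theorem corollary3p13 (Rt : realType) (G : nat -> graph)
  (S' : forall n, {set gV (G n)}) (F' : forall n, {set gE (G n)}) (h : Rt) :
  (forall n, connected_graph (G n)) ->
  tight Rt G ->
  (exists C : Rt, forall n,
      2 * (#|gE (G n)|%:R : Rt) / (#|gV (G n)|%:R) <= C) ->
  (fun n => ln ((tau [set: gV (G n)] [set: gE (G n)] : nat)%:R : Rt) / (#|gV (G n)|%:R))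
     @ \oo --> h ->
  (forall n, is_subgraph (S' n) (F' n)) ->
  (forall n, connected_sub (S' n) (F' n)) ->
  (fun n => (#|[set x in S' n | deg (F' n) x == deg [set: gE (G n)] x]|%:R : Rt)
              / (#|gV (G n)|%:R)) @ \oo --> (1 : Rt) ->
  (fun n => ln ((tau (S' n) (F' n))%:R : Rt) / (#|S' n|%:R)) @ \oo --> h.
Proof.
move=> conG _ [C hC] htau _ conS hfull.
pose N n := #|gV (G n)|; pose b n := #|~: full_deg (S' n) (F' n)|.
have N_gt0 n : (0 < N n)%N.
  by case: (conG n) => /set0Pn[x _] _; apply/card_gt0P; exists x.
have S_gt0 n : (0 < #|S' n|)%N.
  by case: (conS n) => /set0Pn[x xS] _; apply/card_gt0P; exists x.
have bN0 : (fun n => (b n)%:R / (N n)%:R : Rt) @ \oo --> 0.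
  have -> : (fun n => (b n)%:R / (N n)%:R : Rt) =
      (fun n => 1 - #|full_deg (S' n) (F' n)|%:R / (N n)%:R).
    apply/funext => n; rewrite /b cardsCs setCK natrB ?max_card // mulrBl.
    by rewrite divff // pnatr_eq0 -lt0n N_gt0.
  by rewrite -(subrr (1 : Rt)); apply: cvgB; [exact: cvg_cst | exact: hfull].
have EN_le n : #|gE (G n)|%:R / (N n)%:R <= C / 2 by have := hC n; rewrite -mulrA; lra.
apply: (cvg_div_perturb _ _ htau).
- by move=> n; rewrite pnatr_eq0 -lt0n N_gt0.
- by move=> n; rewrite pnatr_eq0 -lt0n S_gt0.
- apply: cvg0_norm_le (ln_card_small_sets_cvg0 N_gt0 EN_le bN0) => n.
  rewrite normrM normfV normr_nat mulrA ler_wpM2r ?invr_ge0 //.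
  exact: ln_tau_sub_dist.
apply: (@squeeze_cvgr _ _ _ _ _ (cst 1) _ _ 1 hfull (cvg_cst (1 : Rt))).
apply: nearW => n /=; apply/andP; split.
  by rewrite ler_wpM2r ?invr_ge0 // ler_nat subset_leq_card // full_deg_sub.
by rewrite /cst ler_pdivrMr ?ltr0n ?(N_gt0 n) // mul1r ler_nat max_card.
Qed.
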